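(* Let $\Lambda\in\mathcal Q_n$. The statements within each of (i)–(iv) are equivalent. (i) For $\mathbf F\in\mathcal M^n$: (a) $\Lambda\mathbf F\prec_{\mathrm{st}}\mathbf F$; (b) $\mathbf F\prec_{\mathrm{st}}\Lambda\mathbf F$; (c) $\Lambda\mathbf F=\mathbf F$. (ii) For $\mathbf F\in\mathcal M^n$: (a) $\Lambda\otimes\mathbf F\prec_{\mathrm{st}}\mathbf F$; (b) $\mathbf F\prec_{\mathrm{st}}\Lambda\otimes\mathbf F$; (c) $\Lambda\otimes\mathbf F=\mathbf F$. (iii) For $\mathbf F\in\mathcal M_1^n$: (a) $\Lambda\otimes\mathbf F\prec_{\mathrm{cx}}\mathbf F$; (b) $\mathbf F\prec_{\mathrm{cx}}\Lambda\otimes\mathbf F$; (c) $\Lambda\otimes\mathbf F=\mathbf F$. (iv) For $\mathbf F\in\mathcal M_1^n$: (a) $\Lambda\mathbf F\prec_{\mathrm{cx}}\mathbf F$; (b) $\Lambda\mathbf F=\mathbf F$.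
   Context: $\mathcal M$ is the set of cdfs on $\mathbb{R}$, $\mathcal M_1$ those with finite mean. $\mathcal Q_n$ is the set of $n\times n$ doubly stochastic matrices. For $\Lambda=(\Lambda_{ij})\in\mathcal Q_n$ and $\mathbf F=(F_1,\dots,F_n)$: $\Lambda\mathbf F$ is the tuple with $i$-th component $\sum_j\Lambda_{ij}F_j$ (distribution mixture); $\Lambda\otimes\mathbf F=(G_1,\dots,G_n)$ with $G_i^{-1}=\sum_j\Lambda_{ij}F_j^{-1}$ (quantile mixture), where $F^{-1}(p)=\inf\{x:F(x)\ge p\}$. For cdfs, $F\prec_{\mathrm{st}}G$ means $F\ge G$ pointwise; for $F,G\in\mathcal M_1$, $F\prec_{\mathrm{cx}}G$ means $\int\phi\,\mathrm dF\le\int\phi\,\mathrm dG$ for all convex $\phi$. For tuples these orders are taken componentwise. *)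

From HB Require Import structures.
From mathcomp Require Import all_boot all_order all_algebra.
From mathcomp Require Import all_classical all_reals.
From mathcomp Require Import topology normedtype sequences realfun measure
  lebesgue_measure lebesgue_integral lebesgue_stieltjes_measure.

Set Implicit Arguments.
Unset Strict Implicit.
Unset Printing Implicit Defensive.
Import Order.TTheory GRing.Theory Num.Theory.
Import numFieldTopology.Exports.

Local Open Scope classical_set_scope.
Local Open Scope ring_scope.

Section cdfs.
Context {R : realType}.

Definition is_cdf (F : R -> R) : Prop :=
  [/\ {homo F : x y / x <= y}, right_continuous F,
      F @ -oo --> (0:R) & F @ +oo --> (1:R)].

(* The cdf of the Dirac mass at 0 (only used as a harmless default). *)
Definition step_cdf (x : R) : R := if x < 0 then 0 else 1.

(* [to_cdf G] is G itself when G is a cdf (the only case in which it is used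
   below); it is only needed to equip G with the library's cumulative
   structure, hence its Lebesgue--Stieltjes (probability) measure. *)
Definition to_cdf (G : R -> R) : R -> R :=
  if asbool (is_cdf G) then G else step_cdf.

Lemma step_cdf_is_cdf : is_cdf step_cdf.
Proof.
split.
- move=> x y xy; rewrite /step_cdf.
  case: ifPn => x0; case: ifPn => y0 //; rewrite ?lexx ?ler01 //.
  by rewrite (le_lt_trans xy y0) in x0.
- move=> x; apply: (cvg_near_cst (step_cdf x)).
  rewrite /step_cdf; case: ifPn => x0.
  + near=> y; suff -> : y < 0 by [].
    by near: y; exact: (nbhs_right_lt x0).
  + near=> y; suff -> : (y < 0) = false by [].
    apply/negbTE; rewrite -leNgt.
    rewrite -leNgt in x0; apply: (le_trans x0); apply: ltW.
    by near: y; exact: nbhs_right_gt.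
- apply: (cvg_near_cst (0:R)); near=> y; rewrite /step_cdf.
  suff -> : y < 0 by [].
  by near: y; apply: nbhs_ninfty_lt; exact: num_real.
- apply: (cvg_near_cst (1:R)); near=> y; rewrite /step_cdf.
  suff -> : (y < 0) = false by [].
  apply/negbTE; rewrite -leNgt.
  by near: y; apply: nbhs_pinfty_ge; exact: num_real.
Unshelve. all: by end_near.
Qed.

Lemma to_cdf_is_cdf (G : R -> R) : is_cdf (to_cdf G).
Proof.
rewrite /to_cdf; case: (asboolP (is_cdf G)) => // _; exact: step_cdf_is_cdf.
Qed.

Lemma to_cdf_nd G : {homo to_cdf G : x y / x <= y}.
Proof. by case: (to_cdf_is_cdf G). Qed.
Lemma to_cdf_rc G : right_continuous (to_cdf G).
Proof. by case: (to_cdf_is_cdf G). Qed.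
Lemma to_cdf_Ny G : to_cdf G @ -oo --> (0:R).
Proof. by case: (to_cdf_is_cdf G). Qed.
Lemma to_cdf_y G : to_cdf G @ +oo --> (1:R).
Proof. by case: (to_cdf_is_cdf G). Qed.

HB.instance Definition _ (G : R -> R) :=
  isCumulative.Build R _ R (to_cdf G) (@to_cdf_nd G) (@to_cdf_rc G).
HB.instance Definition _ (G : R -> R) :=
  isCumulativeBounded.Build R 0 1 (to_cdf G) (@to_cdf_Ny G) (@to_cdf_y G).

Definition law (G : R -> R) := lebesgue_stieltjes_measure (to_cdf G).

Definition quantile (F : R -> R) (p : R) : R := inf [set x | p <= F x].

(* The cdf whose quantile function on (0,1) is the (left-continuous,
   nondecreasing) function Q:  G(x) = sup {p in (0,1) | Q p <= x}
   (with sup of the empty set = 0). *)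
Definition cdf_of_quantile (Q : R -> R) (x : R) : R :=
  sup [set p | 0 < p < 1 /\ Q p <= x].

Definition doubly_stochastic (n : nat) (L : 'M[R]_n) : Prop :=
  [/\ forall i j, 0 <= L i j,
      forall i, \sum_j L i j = 1 &
      forall j, \sum_i L i j = 1].

Definition dmix (n : nat) (L : 'M[R]_n) (F : 'I_n -> R -> R) : 'I_n -> R -> R :=
  fun i x => \sum_j L i j * F j x.

Definition qmix (n : nat) (L : 'M[R]_n) (F : 'I_n -> R -> R) : 'I_n -> R -> R :=
  fun i => cdf_of_quantile (fun p => \sum_j L i j * quantile (F j) p).

Definition st_le (n : nat) (F G : 'I_n -> R -> R) : Prop :=
  forall i x, G i x <= F i x.

Definition convex_fun (phi : R -> R) : Prop :=
  forall (x y t : R), 0 <= t <= 1 ->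
    phi (t * x + (1 - t) * y) <= t * phi x + (1 - t) * phi y.

Definition finite_mean (F : R -> R) : Prop :=
  (\int[law F]_x (`|x|)%:E < +oo)%E.

Definition cx_le (n : nat) (F G : 'I_n -> R -> R) : Prop :=
  forall i (phi : R -> R), convex_fun phi ->
    (\int[law (F i)]_x (phi x)%:E <= \int[law (G i)]_x (phi x)%:E)%E.

End cdfs.

(** Each mixture preserves a sum over the components: because Λ is column
    stochastic, Σ_i (ΛF)_i(x) = Σ_i F_i(x) and Σ_i (Λ⊗F)_i^{-1}(p) =
    Σ_i F_i^{-1}(p).  A componentwise inequality between two vectors with the
    same sum is an equality, which gives (i) and, since the stochastic order is
    the reversed pointwise order of quantiles, (ii).
    For (iii) and (iv) test the convex order on the stop-loss functions
    x ↦ (x - t)_+.  Writing π_F(t) = E_F (X - t)_+, the tail value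
    V_F(a) = min_t ((1 - a) t + π_F(t)) = ∫_a^1 F^{-1} is attained at
    t = F^{-1}(a); it is affine under quantile mixtures, while π is affine under
    distribution mixtures.  The convex order then yields a componentwise
    inequality between vectors with the same sum, hence an equality, and V
    determines the left-continuous quantile function, hence F. *)

From HB Require Import structures.
From mathcomp Require Import all_boot all_order all_algebra.
From mathcomp Require Import all_classical all_reals.
From mathcomp Require Import topology normedtype sequences realfun measure
  lebesgue_measure lebesgue_integral lebesgue_stieltjes_measure.
From mathcomp Require Import ring lra measurable_realfun numfun.

Set Implicit Arguments.
Unset Strict Implicit.
Unset Printing Implicit Defensive.
Import Order.TTheory GRing.Theory Num.Theory.
Import numFieldTopology.Exports.

Local Open Scope classical_set_scope.
Local Open Scope ring_scope.

Lemma ler_sum_eq {R : numDomainType} {n : nat} (a b : 'I_n -> R) :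
  (forall i, a i <= b i) -> \sum_i a i = \sum_i b i -> a =1 b.
Proof.
move=> ab sab i; apply/eqP; rewrite eq_sym -subr_eq0; apply/eqP.
have /psumr_eq0P : \sum_i (b i - a i) = 0 by rewrite sumrB sab subrr.
by apply=> // j _; rewrite subr_ge0.
Qed.

Section quantile_functions.
Context {R : realType}.
Implicit Types (F G Q : R -> R) (p x : R).

Definition is_quantile F Q := forall p x, 0 < p < 1 -> (Q p <= x) = (p <= F x).

Definition unit_valued F := forall x, 0 <= F x <= 1.

Definition nondecreasing01 Q :=
  forall p p', 0 < p -> p <= p' -> p' < 1 -> Q p <= Q p'.

(* Lower semicontinuity from the left on (0, 1); for a nondecreasing Q this is
   left-continuity. *)
Definition left_continuous01 Q :=
  forall p x, 0 < p < 1 -> x < Q p -> exists2 p', 0 < p' < p & x < Q p'.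

Lemma cdf_unit_valued F : is_cdf F -> unit_valued F.
Proof.
case=> nd _ Fn Fp x; apply/andP; split; rewrite leNgt; apply/negP.
- move=> Fx0; near (-oo : set_system R) => t.
  have : F t <= F x by apply: nd; near: t; apply: nbhs_ninfty_le; exact: num_real.
  by apply/negP; rewrite -ltNge; near: t; exact: (cvgr_gt 0 Fn).
- move=> Fx1; near (+oo : set_system R) => t.
  have : F x <= F t by apply: nd; near: t; apply: nbhs_pinfty_ge; exact: num_real.
  by apply/negP; rewrite -ltNge; near: t; exact: (cvgr_lt 1 Fp).
Unshelve. all: by end_near.
Qed.

Lemma quantile_is_quantile F : is_cdf F -> is_quantile F (quantile F).
Proof.
move=> [nd rc Fn Fp] p x /andP[p0 p1]; rewrite /quantile.
set S := [set x | p <= F x].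
have S0 : S !=set0.
  near (+oo : set_system R) => y; exists y; rewrite /S /=; apply: ltW.
  by near: y; exact: (cvgr_gt 1 Fp).
have lbS : has_lbound S.
  near (-oo : set_system R) => y; exists y => z Sz.
  rewrite leNgt; apply/negP => zy.
  have := nd _ _ (ltW zy); rewrite leNgt => /negP; apply.
  by apply: lt_le_trans Sz; near: y; exact: (cvgr_lt 0 Fn).
have inf_in_S : p <= F (inf S).
  rewrite leNgt; apply/negP => Fq.
  near (inf S)^'+ => y.
  have yS : inf S < y by near: y; exact: nbhs_right_gt.
  have [z Sz zy] := inf_lt S0 yS.
  have := nd _ _ (ltW zy); rewrite leNgt => /negP; apply.
  by apply: lt_le_trans Sz; near: y; exact: (cvgr_lt _ (rc (inf S)) _ Fq).
apply/idP/idP => [qx|px]; first exact: le_trans inf_in_S (nd _ _ qx).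
exact: (ge_inf lbS).
Unshelve. all: by end_near.
Qed.

Lemma is_quantile_nondecreasing F Q : is_quantile F Q -> nondecreasing01 Q.
Proof.
move=> QF p p' p0 pp' p'1.
have hp : 0 < p < 1 by rewrite p0 (le_lt_trans pp' p'1).
have hp' : 0 < p' < 1 by rewrite p'1 (lt_le_trans p0 pp').
by rewrite QF //; apply: le_trans pp' _; rewrite -QF.
Qed.

Lemma is_quantile_left_continuous F Q :
  unit_valued F -> is_quantile F Q -> left_continuous01 Q.
Proof.
move=> uF QF p x hp xQ; have /andP[p0 p1] := hp; have /andP[Fx0 Fx1] := uF x.
have Fxp : F x < p by rewrite ltNge -QF // -ltNge.
have hm : 0 < (F x + p) / 2 < 1 by apply/andP; split; lra.
exists ((F x + p) / 2); first by apply/andP; split; lra.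
by rewrite ltNge QF // -ltNge; lra.
Qed.

Lemma cdf_of_quantile_unit_valued Q : unit_valued (cdf_of_quantile Q).
Proof.
move=> x; rewrite /cdf_of_quantile; set S := [set p | _].
have [->|/set0P[s Ss]] := eqVneq S set0; first by rewrite sup0 lexx ler01.
have S_le1 : ubound S 1 by move=> r [/andP[_ /ltW]].
apply/andP; split; last by apply: ge_sup S_le1; exists s.
case: (Ss) => /andP[s0 _] _; apply: le_trans (ltW s0) _.
by apply: (ub_le_sup _ Ss); exists 1.
Qed.

Lemma cdf_of_quantile_is_quantile Q :
  nondecreasing01 Q -> left_continuous01 Q -> is_quantile (cdf_of_quantile Q) Q.
Proof.
move=> nd lc p x hp; rewrite /cdf_of_quantile; set S := [set p | _].
apply/idP/idP => [Qpx|].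
  by apply: (ub_le_sup _ (_ : S p)); [exists 1 => r [/andP[_ /ltW]] | split].
apply: contraTT; rewrite -!ltNge => xQ.
have [p' /andP[p'0 p'p] xQ'] := lc p x hp xQ.
apply: le_lt_trans p'p.
have [->|/set0P S0] := eqVneq S set0; first by rewrite sup0 ltW.
apply: ge_sup S0 _ => r [/andP[r0 r1] Qr]; rewrite leNgt; apply/negP => p'r.
by have := le_trans (nd _ _ p'0 (ltW p'r) r1) Qr; rewrite leNgt xQ'.
Qed.

Lemma quantile_le_of_cdf_le F G q Q : is_quantile F q -> is_quantile G Q ->
  (forall x, F x <= G x) -> forall p, 0 < p < 1 -> Q p <= q p.
Proof. by move=> qF QG FG p hp; rewrite QG //; apply: le_trans (FG _); rewrite -qF. Qed.

Lemma cdf_le_of_quantile_le F G q Q : unit_valued F -> unit_valued G ->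
  is_quantile F q -> is_quantile G Q ->
  (forall p, 0 < p < 1 -> Q p <= q p) -> forall x, F x <= G x.
Proof.
move=> uF uG qF QG Qq x; rewrite leNgt; apply/negP => GF.
have /andP[F0 F1] := uF x; have /andP[G0 G1] := uG x.
have hm : 0 < (G x + F x) / 2 < 1 by apply/andP; split; lra.
have : Q ((G x + F x) / 2) <= x by apply: le_trans (Qq _ hm) _; rewrite qF //; lra.
by rewrite QG //; lra.
Qed.

Lemma cdf_eq_of_quantile_eq F G q Q : unit_valued F -> unit_valued G ->
  is_quantile F q -> is_quantile G Q ->
  (forall p, 0 < p < 1 -> Q p = q p) -> G = F.
Proof.
move=> uF uG qF QG Qq; apply/funext => x; apply/le_anti/andP; split.
- by apply: (cdf_le_of_quantile_le uG uF QG qF) => p hp; rewrite Qq.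
- by apply: (cdf_le_of_quantile_le uF uG qF QG) => p hp; rewrite Qq.
Qed.

Section is_quantile_cdf.
Variables (G Q : R -> R).
Hypotheses (uG : unit_valued G) (QG : is_quantile G Q).

Let mid_point x y : G y < G x -> 0 < (G y + G x) / 2 < 1.
Proof.
by move=> yx; have /andP[? ?] := uG x; have /andP[? ?] := uG y; apply/andP; split; lra.
Qed.

Lemma is_quantile_nondecreasing_cdf : {homo G : x y / x <= y}.
Proof.
move=> x y xy; rewrite leNgt; apply/negP => yx.
have hm := mid_point yx.
have : Q ((G y + G x) / 2) <= y by apply: le_trans xy; rewrite QG //; lra.
by rewrite QG //; lra.
Qed.

Lemma is_quantile_right_continuous : right_continuous G.
Proof.
move=> x; apply/cvgrPdist_lt => e e0; have /andP[Gx0 Gx1] := uG x.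
have Gx_le : \forall y \near x^'+, G x <= G y.
  near=> y; apply: is_quantile_nondecreasing_cdf; apply: ltW.
  by near: y; exact: nbhs_right_gt.
have [ge1|lt1] := leP 1 (G x + e / 2).
  near=> y; have /andP[Gy0 Gy1] := uG y.
  have : G x <= G y by near: y.
  by move=> h; rewrite ler0_norm; lra.
have hp : 0 < G x + e / 2 < 1 by apply/andP; split; lra.
have xQ : x < Q (G x + e / 2) by rewrite ltNge QG //; lra.
near=> y; have : G x <= G y by near: y.
have : G y < G x + e / 2.
  rewrite ltNge -QG // -ltNge; near: y; exact: nbhs_right_lt.
by move=> h h'; rewrite ler0_norm; lra.
Unshelve. all: by end_near.
Qed.

Lemma is_quantile_is_cdf : is_cdf G.
Proof.
split; [exact: is_quantile_nondecreasing_cdf | exact: is_quantile_right_continuous| |].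
- apply/cvgrPdist_lt => e e0.
  have hp : 0 < Num.min (e / 2) (1 / 2) < 1.
    rewrite lt_min gt_min; apply/andP; split; first by apply/andP; split; lra.
    by apply/orP; right; lra.
  near=> y; have /andP[Gy0 Gy1] := uG y.
  have : G y < Num.min (e / 2) (1 / 2).
    rewrite ltNge -QG // -ltNge.
    by near: y; apply: nbhs_ninfty_lt; exact: num_real.
  by rewrite lt_min sub0r normrN ger0_norm // => /andP[]; lra.
- apply/cvgrPdist_lt => e e0.
  have hp : 0 < Num.max (1 - e / 2) (1 / 2) < 1.
    rewrite lt_max gt_max; apply/andP; split; first by apply/orP; right; lra.
    by apply/andP; split; lra.
  near=> y; have /andP[Gy0 Gy1] := uG y.
  have : Num.max (1 - e / 2) (1 / 2) <= G y.
    by rewrite -QG //; near: y; apply: nbhs_pinfty_ge; exact: num_real.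
  by rewrite ge_max => /andP[? ?]; rewrite ger0_norm; lra.
Unshelve. all: by end_near.
Qed.

End is_quantile_cdf.

End quantile_functions.

Definition itv01 {R : realType} : set (measurableTypeR R) := `]0%R, 1%R[%classic.

Lemma measurable_itv01 {R : realType} : measurable (@itv01 R).
Proof. exact: measurable_itv. Qed.

#[local] Hint Resolve measurable_itv01 : core.

Lemma lebesgue_itv01 {R : realType} : lebesgue_measure (@itv01 R) = 1%E.
Proof. by rewrite /itv01 lebesgue_measure_itv /= lte_fin ltr01 sube0. Qed.

Lemma itv01P {R : realType} (p : R) : itv01 p <-> 0 < p < 1.
Proof. by rewrite /itv01 /= in_itv. Qed.

Lemma ge0_integral_mrestr d (T : measurableType d) (R : realType)
    (mu : {measure set T -> \bar R}) (D : set T) (mD : measurable D)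
    (h : T -> \bar R) :
  measurable_fun setT h -> (forall x, (0 <= h x)%E) ->
  (\int[mrestr mu mD]_x h x = \int[mu]_(x in D) h x)%E.
Proof.
move=> mh h0; rewrite -(setUv D) ge0_integral_setU //; last 3 first.
- exact: measurableC.
- by rewrite setUv.
- exact/disj_setPCl.
rewrite [X in (_ + X)%E]null_set_integral //; last 3 first.
- exact: measurableC.
- exact: measurable_funTS.
- by rewrite /= /mrestr setICl measure0.
rewrite adde0; apply: eq_measure_integral => A mA AD.
by rewrite /= /mrestr setIidl.
Qed.

Lemma ge0_integral_wsum d (T : measurableType d) (R : realType)
    (mu : {measure set T -> \bar R}) (D : set T) (mD : measurable D) n
    (c : 'I_n -> R) (f : 'I_n -> T -> R) :
  (forall j, 0 <= c j) -> (forall j, measurable_fun D (fun x => (f j x)%:E)) ->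
  (forall j x, 0 <= f j x) ->
  (\int[mu]_(x in D) (\sum_j c j * f j x)%:E =
   \sum_j (c j)%:E * \int[mu]_(x in D) (f j x)%:E)%E.
Proof.
move=> c0 mf f0; under eq_integral do rewrite -sumEFin.
rewrite ge0_integral_sum //; last 2 first.
- move=> j /=; under eq_fun do rewrite EFinM.
  exact: emeasurable_funM (measurable_cst _) (mf j).
- by move=> j x _; rewrite lee_fin mulr_ge0.
apply: eq_bigr => j _; under eq_integral do rewrite EFinM.
by rewrite ge0_integralZl_EFin // => x _; rewrite lee_fin.
Qed.

Section law_of_quantile.
Context {R : realType}.
Local Notation lebesgue := (@lebesgue_measure R).

Lemma nondecreasing01_measurable (Q : R -> R) :
  nondecreasing01 Q -> measurable_fun itv01 Q.
Proof.
move=> nd; apply: (measurability (@RGenCInfty.G R)) => [|/= _ [_] [r] -> <-].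
  exact: RGenCInfty.measurableE.
apply: is_interval_measurable => s t /=; rewrite /itv01 /= => -[].
rewrite !in_itv /= => /andP[s0 s1] Qs [] /andP[t0 t1] Qt u /andP[su ut].
split; first by rewrite in_itv /= (lt_le_trans s0 su) (le_lt_trans ut t1).
move: Qs; rewrite !in_itv /= !andbT => Qs.
by apply: le_trans Qs _; apply: nd => //; exact: le_lt_trans ut t1.
Qed.

Lemma law_itv_oc (F : R -> R) (a b : R) : is_cdf F -> a <= b ->
  law F `]a, b]%classic = (F b - F a)%:E.
Proof.
move=> cF ab; rewrite /law /lebesgue_stieltjes_measure /measure_extension /=.
rewrite measurable_mu_extE /=; last exact: is_ocitv.
by rewrite wlength_itv_bnd // /to_cdf asboolT.
Qed.

Lemma lebesgue_itv_oc01 (u v : R) : 0 <= u -> u <= v -> v <= 1 ->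
  lebesgue (`]u, v]%classic `&` itv01) = (v - u)%:E.
Proof.
move=> u0 uv v1.
have itvE b : lebesgue [set` Interval (BRight u) (BSide b v)] = (v - u)%:E.
  rewrite lebesgue_measure_itv; case: b => /=; rewrite lte_fin;
    (case: ifPn => [_|]; first by rewrite EFinB);
    by rewrite -leNgt => vu; rewrite (@le_anti _ _ u v) ?uv ?subrr.
apply/le_anti/andP; split.
- rewrite -(itvE false); apply: le_measure; rewrite ?inE; last exact: subIsetl.
  + exact: measurableI.
  + exact: measurable_itv.
- rewrite -(itvE true); apply: le_measure; rewrite ?inE; first exact: measurable_itv.
  + exact: measurableI.
  + by rewrite subsetI; split; [apply: subset_itvl | apply: subset_itv];
      rewrite bnd_simp.
Qed.

Section law_as_image_of_lebesgue.
Variables (F Q : R -> R).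
Hypotheses (F_cdf : is_cdf F) (QF : is_quantile F Q).

Let Q01 := (Q : measurableTypeR R -> measurableTypeR R) \_ itv01.

Let measurable_Q01 : measurable_fun setT Q01.
Proof.
rewrite /Q01 -measurable_restrictT //.
exact: nondecreasing01_measurable (is_quantile_nondecreasing QF).
Qed.

(* The measure instance of a pushforward takes the measurability of the map as
   an argument, which [refine] leaves as a goal. *)
Let quantile_image : {measure set (measurableTypeR R) -> \bar R}.
Proof.
refine (pushforward (mrestr lebesgue measurable_itv01) Q01
  : {measure set _ -> \bar R}).
exact: measurable_Q01.
Defined.

Let quantile_image_itv_oc (a b : R) : a <= b ->
  quantile_image `]a, b]%classic = (F b - F a)%:E.
Proof.
move=> ab; have /andP[Fa0 Fa1] := cdf_unit_valued F_cdf a.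
have /andP[Fb0 Fb1] := cdf_unit_valued F_cdf b.
have [nd _ _ _] := F_cdf.
rewrite /quantile_image /= /pushforward /mrestr.
have -> : Q01 @^-1` `]a, b] `&` itv01 = `]F a, F b]%classic `&` itv01.
  apply/seteqP; split=> p [+ p01]; have /itv01P hp := p01;
    by rewrite /Q01 /= patchT ?(mem_set p01) // !in_itv /= !ltNge !QF.
exact: lebesgue_itv_oc01 (nd _ _ ab) Fb1.
Qed.

Let law_quantile_image A : measurable A -> law F A = quantile_image A.
Proof.
move=> mA; apply: lebesgue_stieltjes_measure_unique => // I [[a b]] /= _ <-.
have [ab|ba] := leP a b; first by rewrite quantile_image_itv_oc // -law_itv_oc.
by rewrite set_itv_ge ?measure0 // bnd_simp -leNgt ltW.
Qed.

Lemma integral_law_quantile (phi : R -> R) :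
  measurable_fun setT phi -> (forall x, 0 <= phi x) ->
  (\int[law F]_x (phi x)%:E = \int[lebesgue]_(p in itv01) (phi (Q p))%:E)%E.
Proof.
move=> mphi phi0.
rewrite (eq_measure_integral quantile_image); last first.
  by move=> A mA _; exact: law_quantile_image.
rewrite ge0_integral_pushforward //; last 2 first.
- exact/measurable_EFinP.
- by move=> y _; rewrite lee_fin.
rewrite preimage_setT ge0_integral_mrestr; last 2 first.
- exact/measurable_EFinP/measurableT_comp.
- by move=> x /=; rewrite lee_fin.
by apply: eq_integral => x x01 /=; rewrite /Q01 patchT.
Qed.

End law_as_image_of_lebesgue.

End law_of_quantile.

Section stop_loss.
Context {R : realType}.
Local Notation lebesgue := (@lebesgue_measure R).
Implicit Types (Q : R -> R) (a t x : R).

Definition excess t x : R := Num.max (x - t) 0.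

Lemma excess_ge0 t x : 0 <= excess t x.
Proof. by rewrite /excess le_max lexx orbT. Qed.

Lemma excess_ge t x : x - t <= excess t x.
Proof. by rewrite /excess le_max lexx. Qed.

Lemma excessE t x : t <= x -> excess t x = x - t.
Proof. by move=> tx; rewrite /excess max_l // subr_ge0. Qed.

Lemma excess_eq0 t x : x <= t -> excess t x = 0.
Proof. by move=> xt; rewrite /excess max_r // subr_le0. Qed.

Lemma excess_subC t x : excess t x - excess x t = x - t.
Proof.
case: (leP t x) => [tx|/ltW xt]; first by rewrite excessE // (excess_eq0 tx) subr0.
by rewrite excess_eq0 // excessE // sub0r opprB.
Qed.

Lemma excess_convex t : convex_fun (excess t).
Proof.
move=> x y s /andP[s0 s1]; rewrite /excess ge_max.
have := excess_ge t x; have := excess_ge t y.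
have := excess_ge0 t x; have := excess_ge0 t y.
by rewrite /excess => *; apply/andP; split; nra.
Qed.

Lemma measurable_excess t : measurable_fun setT (excess t).
Proof.
apply: (@nondecreasing_measurable R setT) => // x y xy.
by rewrite /excess ge_max !le_max lerD2r xy lexx orbT.
Qed.

Definition stop_loss Q t : \bar R :=
  \int[lebesgue]_(p in itv01) (excess t (Q p))%:E.

(* Rockafellar--Uryasev: for 0 < a < 1 the minimum over t of
   [tail_objective (fine \o stop_loss Q) a t] is ∫_a^1 Q, attained at Q a. *)
Definition tail_objective (pi : R -> R) a t : R := (1 - a) * t + pi t.

Definition tail_value Q a : R := tail_objective (fine \o stop_loss Q) a (Q a).

Lemma stop_loss_ge0 Q t : (0 <= stop_loss Q t)%E.
Proof. by apply: integral_ge0 => x _; rewrite lee_fin excess_ge0. Qed.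

Lemma measurable_excess_comp Q t :
  nondecreasing01 Q -> measurable_fun itv01 (fun p => (excess t (Q p))%:E).
Proof.
move=> nd; apply/measurable_EFinP.
exact: measurableT_comp (measurable_excess t) (nondecreasing01_measurable nd).
Qed.

Lemma measurable_norm_comp Q :
  nondecreasing01 Q -> measurable_fun itv01 (fun p => (`|Q p|)%:E).
Proof.
move=> nd; apply/measurable_EFinP.
exact: measurableT_comp (@normr_measurable R setT) (nondecreasing01_measurable nd).
Qed.

Lemma stop_loss_fin_num Q t : nondecreasing01 Q ->
  (\int[lebesgue]_(p in itv01) (`|Q p|)%:E < +oo)%E ->
  stop_loss Q t \is a fin_num.
Proof.
move=> nd Qint; rewrite ge0_fin_numE ?stop_loss_ge0 //.
apply: (@le_lt_trans _ _ (\int[lebesgue]_(p in itv01) ((`|Q p|)%:E + (`|t|)%:E))%E).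
  apply: ge0_le_integral => //.
  - by move=> x _; rewrite lee_fin excess_ge0.
  - exact: measurable_excess_comp.
  - by apply: emeasurable_funD; [exact: measurable_norm_comp | exact: measurable_cst].
  - move=> x _; rewrite -EFinD lee_fin /excess ge_max addr_ge0 // andbT.
    by apply: lerD; rewrite ?ler_norm // -normrN ler_norm.
rewrite ge0_integralD //; last 3 first.
- by move=> x _; rewrite lee_fin.
- exact: measurable_norm_comp.
- by move=> x _; rewrite lee_fin.
rewrite lte_add_pinfty // integral_cst // (_ : _ itv01 = 1%E) ?mule1 ?ltry //.
exact: lebesgue_itv01.
Qed.

Lemma tail_value_le Q a t : nondecreasing01 Q ->
  (forall t, stop_loss Q t \is a fin_num) -> 0 < a < 1 ->
  tail_value Q a <= tail_objective (fine \o stop_loss Q) a t.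
Proof.
move=> nd fin /andP[a0 a1]; rewrite /tail_value /tail_objective /=.
set T := Q a.
pose A : set (measurableTypeR R) := `[a, +oo[%classic.
have mA : measurable A by exact: measurable_itv.
have lebesgueA : lebesgue (A `&` itv01) = (1 - a)%:E.
  have -> : A `&` itv01 = `[a, 1[%classic.
    apply/seteqP; split=> p; rewrite /A /itv01 /= !in_itv /= ?andbT.
      by move=> [-> /andP[_ ->]].
    by move=> /andP[ap ->]; rewrite ap (lt_le_trans a0 ap).
  by rewrite lebesgue_measure_itv /= lte_fin a1 EFinB.
have m_tail (c : R) : measurable_fun itv01 (fun p => (c * \1_A p)%:E).
  apply/measurable_EFinP/measurable_funM; first exact: measurable_cst.
  exact: measurable_indic.
have tail_shift s c : 0 <= c ->
    (\int[lebesgue]_(p in itv01) ((excess s (Q p))%:E + (c * \1_A p)%:E) =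
     stop_loss Q s + (c * (1 - a))%:E)%E.
  move=> c0; rewrite ge0_integralD //; last 3 first.
  - by move=> p _; rewrite lee_fin excess_ge0.
  - exact: measurable_excess_comp.
  - by move=> p _; rewrite lee_fin mulr_ge0.
  congr (_ + _)%E; under eq_integral do rewrite EFinM.
  rewrite ge0_integralZl_EFin ?integral_indic //.
  - by rewrite EFinM -lebesgueA.
  - by move=> p _; rewrite lee_fin.
  - exact/measurable_EFinP/measurable_indic.
have : (stop_loss Q T + (excess t T * (1 - a))%:E <=
        stop_loss Q t + (excess T t * (1 - a))%:E)%E.
  rewrite -!tail_shift ?excess_ge0 //; apply: ge0_le_integral => //.
  - by move=> p _; rewrite adde_ge0 // lee_fin ?excess_ge0 ?mulr_ge0 ?excess_ge0.
  - by apply: emeasurable_funD => //; exact: measurable_excess_comp.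
  - by apply: emeasurable_funD => //; exact: measurable_excess_comp.
  move=> p /itv01P /andP[p0 p1]; rewrite -!EFinD lee_fin indicE.
  case: (leP a p) => ap.
  - have Tp : T <= Q p by apply: nd.
    rewrite mem_set; last by rewrite /A /= in_itv /= ap.
    rewrite !mulr1 (excessE Tp).
    by have := excess_ge t (Q p); have := excess_subC t T; lra.
  - have pT : Q p <= T by apply: nd => //; exact: ltW.
    rewrite memNset; last by rewrite /A /= in_itv /= andbT leNgt ap.
    by rewrite !mulr0 !addr0 (excess_eq0 pT) excess_ge0.
rewrite -(fineK (fin T)) -(fineK (fin t)) -!EFinD lee_fin.
have := excess_subC t T; nra.
Qed.

Lemma tail_minimizer_le (pi1 pi2 Q1 Q2 : R -> R) :
  (forall a t, 0 < a < 1 -> tail_objective pi1 a (Q1 a) <= tail_objective pi1 a t) ->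
  (forall a t, 0 < a < 1 -> tail_objective pi2 a (Q2 a) <= tail_objective pi2 a t) ->
  (forall a, 0 < a < 1 ->
     tail_objective pi1 a (Q1 a) = tail_objective pi2 a (Q2 a)) ->
  forall a b, 0 < a -> a < b -> b < 1 -> Q1 a <= Q2 b.
Proof.
move=> min1 min2 eq12 a b a0 ab b1.
have ha : 0 < a < 1 by rewrite a0 (lt_trans ab b1).
have hb : 0 < b < 1 by rewrite b1 (lt_trans a0 ab).
(* with V the common minimum value, V a - V b lies between (b - a) Q1 a and
   (b - a) Q2 b *)
have := min1 b (Q1 a) hb; have := min2 a (Q2 b) ha.
have := eq12 a ha; have := eq12 b hb; rewrite /tail_objective; nra.
Qed.

Lemma tail_minimizers_eq (pi1 pi2 Q1 Q2 : R -> R) :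
  left_continuous01 Q1 -> left_continuous01 Q2 ->
  (forall a t, 0 < a < 1 -> tail_objective pi1 a (Q1 a) <= tail_objective pi1 a t) ->
  (forall a t, 0 < a < 1 -> tail_objective pi2 a (Q2 a) <= tail_objective pi2 a t) ->
  (forall a, 0 < a < 1 ->
     tail_objective pi1 a (Q1 a) = tail_objective pi2 a (Q2 a)) ->
  forall a, 0 < a < 1 -> Q1 a = Q2 a.
Proof.
move=> lc1 lc2 min1 min2 eq12 b hb; have /andP[_ b1] := hb.
have le12 := tail_minimizer_le min1 min2 eq12.
have le21 := tail_minimizer_le min2 min1 (fun a ha => esym (eq12 a ha)).
apply/le_anti/andP; split; rewrite leNgt; apply/negP => lt.
- have [a /andP[a0 ab] ltQ] := lc1 b (Q2 b) hb lt.
  by have := le12 a b a0 ab b1; rewrite leNgt ltQ.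
- have [a /andP[a0 ab] ltQ] := lc2 b (Q1 b) hb lt.
  by have := le21 a b a0 ab b1; rewrite leNgt ltQ.
Qed.

Lemma tail_value_inj Q1 Q2 :
  nondecreasing01 Q1 -> nondecreasing01 Q2 ->
  left_continuous01 Q1 -> left_continuous01 Q2 ->
  (forall t, stop_loss Q1 t \is a fin_num) ->
  (forall t, stop_loss Q2 t \is a fin_num) ->
  (forall a, 0 < a < 1 -> tail_value Q1 a = tail_value Q2 a) ->
  forall a, 0 < a < 1 -> Q1 a = Q2 a.
Proof.
move=> nd1 nd2 lc1 lc2 fin1 fin2.
by apply: tail_minimizers_eq lc1 lc2 _ _ => a t ha; exact: tail_value_le.
Qed.

Lemma stop_loss_law G Q t : is_cdf G -> is_quantile G Q ->
  (\int[law G]_x (excess t x)%:E)%E = stop_loss Q t.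
Proof.
move=> G_cdf QG; rewrite (integral_law_quantile G_cdf QG) //.
- exact: measurable_excess.
- exact: excess_ge0.
Qed.

Lemma finite_mean_integrable G Q : is_cdf G -> is_quantile G Q -> finite_mean G ->
  (\int[lebesgue]_(p in itv01) (`|Q p|)%:E < +oo)%E.
Proof.
by move=> G_cdf QG; rewrite /finite_mean (integral_law_quantile G_cdf QG).
Qed.

Lemma cx_le_stop_loss n (G H qG qH : 'I_n -> R -> R) :
  (forall i, is_cdf (G i)) -> (forall i, is_cdf (H i)) ->
  (forall i, is_quantile (G i) (qG i)) -> (forall i, is_quantile (H i) (qH i)) ->
  cx_le G H -> forall i t, (stop_loss (qG i) t <= stop_loss (qH i) t)%E.
Proof.
move=> G_cdf H_cdf qGG qHH GH i t.
rewrite -(stop_loss_law t (G_cdf i) (qGG i)) -(stop_loss_law t (H_cdf i) (qHH i)).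
exact/GH/excess_convex.
Qed.

End stop_loss.

Section quantile_mixture.
Context {R : realType} {n : nat} (c : 'I_n -> R) (q : 'I_n -> R -> R).
Hypotheses (c_ge0 : forall j, 0 <= c j) (q_nd : forall j, nondecreasing01 (q j)).
Local Notation lebesgue := (@lebesgue_measure R).
Local Notation Qmix := (fun p => \sum_j c j * q j p).

Lemma nondecreasing01_mix : nondecreasing01 Qmix.
Proof.
move=> p p' p0 pp' p'1; apply: ler_sum => j _.
by apply: ler_wpM2l => //; exact: q_nd.
Qed.

Lemma left_continuous01_mix :
  (forall j, left_continuous01 (q j)) -> \sum_j c j = 1 -> left_continuous01 Qmix.
Proof.
move=> q_lc c1 p x hp /= xQ; have /andP[p0 p1] := hp.
set e := (\sum_j c j * q j p - x) / 2.
have e0 : 0 < e by rewrite /e; lra.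
have /fin_all_exists[f f_ok] : forall j, exists p', 0 < p' < p /\ q j p - e < q j p'.
  move=> j; have lt_e : q j p - e < q j p by lra.
  by have [p' p'p Qp'] := q_lc j p _ hp lt_e; exists p'.
pose p' := \big[Order.max/(p / 2)]_j f j.
have p'_ge : p / 2 <= p' by exact: bigmax_ge_id.
have p'_lt : p' < p.
  by apply: bigmax_lt; [lra | move=> j _; have [/andP[]] := f_ok j].
exists p'; first by apply/andP; split; lra.
have : \sum_j c j * (q j p - e) <= \sum_j c j * q j p'.
  apply: ler_sum => j _; apply: ler_wpM2l => //.
  have [/andP[fj0 _] lt_fj] := f_ok j.
  apply: le_trans (ltW lt_fj) _; apply: q_nd => //; [exact: le_bigmax | lra].
have -> : \sum_j c j * (q j p - e) = \sum_j c j * q j p - e.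
  by rewrite (eq_bigr _ (fun j _ => mulrBr _ _ _)) sumrB -mulr_suml c1 mul1r.
by rewrite /e; lra.
Qed.

(* quantile functions are comonotone: all the q j p - q j a have the sign of p - a *)
Lemma excess_mix a p : 0 < a < 1 -> 0 < p < 1 ->
  excess (Qmix a) (Qmix p) = \sum_j c j * excess (q j a) (q j p).
Proof.
move=> /andP[a0 a1] /andP[p0 p1]; case: (leP a p) => ap.
- have le j : q j a <= q j p by exact: q_nd.
  rewrite excessE; last by apply: ler_sum => j _; exact: ler_wpM2l.
  by rewrite -sumrB; apply: eq_bigr => j _; rewrite excessE // mulrBr.
- have le j : q j p <= q j a by apply: q_nd => //; exact: ltW.
  rewrite excess_eq0; last by apply: ler_sum => j _; exact: ler_wpM2l.
  by rewrite big1 // => j _; rewrite excess_eq0 // mulr0.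
Qed.

Lemma stop_loss_mix a : 0 < a < 1 ->
  stop_loss Qmix (Qmix a) = (\sum_j (c j)%:E * stop_loss (q j) (q j a))%E.
Proof.
move=> ha; rewrite /stop_loss -ge0_integral_wsum //; last 2 first.
- by move=> j; exact: measurable_excess_comp.
- by move=> j p; exact: excess_ge0.
by apply: eq_integral => p /set_mem /itv01P hp; rewrite excess_mix.
Qed.

Lemma integrable_mix :
  (forall j, \int[lebesgue]_(p in itv01) (`|q j p|)%:E < +oo)%E ->
  (\int[lebesgue]_(p in itv01) (`|Qmix p|)%:E < +oo)%E.
Proof.
move=> q_int.
apply: (@le_lt_trans _ _ (\int[lebesgue]_(p in itv01) (\sum_j c j * `|q j p|)%:E)%E).
  apply: ge0_le_integral => //.
  - by move=> x _; rewrite lee_fin.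
  - exact: measurable_norm_comp nondecreasing01_mix.
  - apply/measurable_EFinP/measurable_sum => j.
    apply: measurable_funM; first exact: measurable_cst.
    apply: measurableT_comp (@normr_measurable R setT) _.
    exact: nondecreasing01_measurable (q_nd j).
  - move=> x _; rewrite lee_fin; apply: le_trans (ler_norm_sum _ _ _) _.
    by apply: ler_sum => j _; rewrite normrM ger0_norm.
rewrite ge0_integral_wsum //; last by move=> j; exact: measurable_norm_comp.
apply: lte_sum_pinfty => j _.
have : (\int[lebesgue]_(p in itv01) (`|q j p|)%:E)%E \is a fin_num.
  by rewrite ge0_fin_numE ?q_int //; apply: integral_ge0 => x _; rewrite lee_fin.
by move=> /fineK <-; rewrite -EFinM ltry.
Qed.

Lemma tail_value_mix a : (forall j t, stop_loss (q j) t \is a fin_num) -> 0 < a < 1 ->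
  tail_value Qmix a = \sum_j c j * tail_value (q j) a.
Proof.
move=> q_fin ha; rewrite /tail_value /tail_objective /=.
have -> : stop_loss Qmix (Qmix a) = (\sum_j c j * fine (stop_loss (q j) (q j a)))%:E.
  by rewrite stop_loss_mix // -sumEFin; apply: eq_bigr => j _; rewrite EFinM fineK.
by rewrite /= mulr_sumr -big_split; apply: eq_bigr => j _ /=; ring.
Qed.

End quantile_mixture.

Section doubly_stochastic.
Context {R : realType} {n : nat} (L : 'M[R]_n).
Hypothesis L_ds : doubly_stochastic L.

Let L_ge0 i j : 0 <= L i j. Proof. by case: L_ds. Qed.
Let L_row i : \sum_j L i j = 1. Proof. by case: L_ds. Qed.
Let L_col j : \sum_i L i j = 1. Proof. by case: L_ds. Qed.

Lemma sum_mix (a : 'I_n -> R) : \sum_i \sum_j L i j * a j = \sum_j a j.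
Proof.
rewrite exchange_big /=; apply: eq_bigr => j _.
by rewrite -mulr_suml L_col mul1r.
Qed.

Lemma mix_le_eq (a : 'I_n -> R) : (forall i, \sum_j L i j * a j <= a i) ->
  forall i, \sum_j L i j * a j = a i.
Proof. by move=> le; apply: ler_sum_eq le _; rewrite sum_mix. Qed.

Lemma mix_ge_eq (a : 'I_n -> R) : (forall i, a i <= \sum_j L i j * a j) ->
  forall i, \sum_j L i j * a j = a i.
Proof.
move=> ge i; apply/esym; apply: (ler_sum_eq (b := fun i => \sum_j L i j * a j) ge).
by rewrite sum_mix.
Qed.

Lemma dmix_st_fixed (F : 'I_n -> R -> R) :
  (st_le (dmix L F) F <-> dmix L F = F) /\ (st_le F (dmix L F) <-> dmix L F = F).
Proof.
split; split=> [le|->]; try by move=> i x.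
- apply/funext => i; apply/funext => x.
  exact: (mix_ge_eq (a := fun k => F k x)) (fun k => le k x) i.
- apply/funext => i; apply/funext => x.
  exact: (mix_le_eq (a := fun k => F k x)) (fun k => le k x) i.
Qed.

Section cdf_mixtures.
Variable F : 'I_n -> R -> R.
Hypothesis F_cdf : forall j, is_cdf (F j).

Let q j := quantile (F j).
Let Q i p := \sum_j L i j * q j p.

Let q_quantile j : is_quantile (F j) (q j). Proof. exact: quantile_is_quantile. Qed.
Let F_unit j : unit_valued (F j). Proof. exact: cdf_unit_valued. Qed.
Let q_nd j : nondecreasing01 (q j).
Proof. exact: is_quantile_nondecreasing (q_quantile j). Qed.
Let q_lc j : left_continuous01 (q j).
Proof. exact: is_quantile_left_continuous (F_unit j) (q_quantile j). Qed.
Let Q_nd i : nondecreasing01 (Q i).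
Proof. exact: nondecreasing01_mix (L_ge0 i) q_nd. Qed.
Let Q_lc i : left_continuous01 (Q i).
Proof. exact: left_continuous01_mix (L_ge0 i) q_nd q_lc (L_row i). Qed.
Let Q_quantile i : is_quantile (qmix L F i) (Q i).
Proof. exact: cdf_of_quantile_is_quantile (Q_nd i) (@Q_lc i). Qed.
Let qmix_unit i : unit_valued (qmix L F i).
Proof. exact: cdf_of_quantile_unit_valued. Qed.
Let qmix_cdf i : is_cdf (qmix L F i).
Proof. exact: is_quantile_is_cdf (qmix_unit i) (Q_quantile i). Qed.

Let qmix_fixed : (forall i p, 0 < p < 1 -> Q i p = q i p) -> qmix L F = F.
Proof. by move=> Qq; apply/funext => i; exact: cdf_eq_of_quantile_eq (Qq i). Qed.

Lemma qmix_st_fixed :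
  (st_le (qmix L F) F <-> qmix L F = F) /\ (st_le F (qmix L F) <-> qmix L F = F).
Proof.
split; split=> [le|->]; try by move=> i x.
- apply: qmix_fixed => i p hp; apply: (mix_le_eq (a := fun k => q k p)) => k.
  exact: quantile_le_of_cdf_le (q_quantile k) (Q_quantile k) (le k) p hp.
- apply: qmix_fixed => i p hp; apply: (mix_ge_eq (a := fun k => q k p)) => k.
  exact: quantile_le_of_cdf_le (Q_quantile k) (q_quantile k) (le k) p hp.
Qed.

Section finite_mean.
Hypothesis F_mean : forall j, finite_mean (F j).

Let q_integrable j :
  (\int[lebesgue_measure]_(p in itv01) (`|q j p|)%:E < +oo)%E.
Proof. exact: finite_mean_integrable. Qed.

Let q_fin j t : stop_loss (q j) t \is a fin_num.
Proof. exact: stop_loss_fin_num. Qed.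

Let Q_fin i t : stop_loss (Q i) t \is a fin_num.
Proof. exact/stop_loss_fin_num/integrable_mix. Qed.

Lemma qmix_cx_fixed :
  (cx_le (qmix L F) F <-> qmix L F = F) /\ (cx_le F (qmix L F) <-> qmix L F = F).
Proof.
have V_mix i a : 0 < a < 1 -> tail_value (Q i) a = \sum_j L i j * tail_value (q j) a.
  exact: tail_value_mix.
have fixed : (forall i a, 0 < a < 1 -> tail_value (Q i) a = tail_value (q i) a) ->
    qmix L F = F.
  by move=> V_eq; apply: qmix_fixed => i; exact: tail_value_inj (V_eq i).
split; split=> [cx|->]; try by move=> i phi _.
- apply: fixed => i a ha; rewrite V_mix //.
  apply: (mix_le_eq (a := fun k => tail_value (q k) a)) => k; rewrite -V_mix //.
  apply: le_trans (tail_value_le (q k a) (Q_nd k) (Q_fin k) ha) _.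
  rewrite /tail_objective lerD2l /= fine_le //.
  exact: cx_le_stop_loss qmix_cdf F_cdf Q_quantile q_quantile cx k _.
- apply: fixed => i a ha; rewrite V_mix //.
  apply: (mix_ge_eq (a := fun k => tail_value (q k) a)) => k; rewrite -V_mix //.
  apply: le_trans (tail_value_le (Q k a) (q_nd k) (q_fin k) ha) _.
  rewrite /tail_objective lerD2l /= fine_le //.
  exact: cx_le_stop_loss F_cdf qmix_cdf q_quantile Q_quantile cx k _.
Qed.

End finite_mean.

Let cvg_dmix i (D : set_system R) (l : 'I_n -> R) : Filter D ->
  (forall j, F j x @[x --> D] --> l j) -> dmix L F i x @[x --> D] --> \sum_j L i j * l j.
Proof.
move=> D_filter Fl; apply: cvg_big => // [|j _]; first exact: add_continuous.
exact: (cvgM (cvg_cst (L i j)) (Fl j)).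
Qed.

Let dmix_cdf i : is_cdf (dmix L F i).
Proof.
split.
- move=> x y xy; apply: ler_sum => j _; apply: ler_wpM2l => //.
  by case: (F_cdf j) => nd _ _ _; exact: nd.
- by move=> x; apply: cvg_dmix => j; case: (F_cdf j) => _ rc _ _; exact: rc.
- have -> : (0 : R) = \sum_j L i j * 0 by rewrite big1 // => j _; rewrite mulr0.
  by apply: cvg_dmix => j; case: (F_cdf j).
- have -> : (1 : R) = \sum_j L i j * 1 by under eq_bigr do rewrite mulr1.
  by apply: cvg_dmix => j; case: (F_cdf j).
Qed.

Let scaled_laws i : {measure set (measurableTypeR R) -> \bar R}^nat := fun k =>
  if insub k is Some j then mscale (interval_inference.NngNum (L_ge0 i j)) (law (F j))
  else mzero.

Let scaled_lawsE i (j : 'I_n) A : scaled_laws i j A = ((L i j)%:E * law (F j) A)%E.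
Proof. by rewrite /scaled_laws valK. Qed.

Let law_dmix i A : measurable A -> law (dmix L F i) A = msum (scaled_laws i) n A.
Proof.
move=> mA; apply: lebesgue_stieltjes_measure_unique => // I [[a b]] /= _ <-.
have [ab|ba] := leP a b; last by rewrite set_itv_ge ?measure0 // bnd_simp -leNgt ltW.
rewrite -[LHS]/(law _ _) law_itv_oc // /msum /=.
under eq_bigr => j _ do rewrite scaled_lawsE law_itv_oc // -EFinM.
rewrite sumEFin /dmix -sumrB; congr EFin; apply: eq_bigr => j _.
by rewrite mulrBr.
Qed.

Let integral_law_dmix i (phi : R -> R) : measurable_fun setT phi ->
  (forall x, 0 <= phi x) ->
  (\int[law (dmix L F i)]_x (phi x)%:E =
   \sum_j (L i j)%:E * \int[law (F j)]_x (phi x)%:E)%E.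
Proof.
move=> mphi phi0.
rewrite (eq_measure_integral (msum (scaled_laws i) n)); last first.
  by move=> A mA _; exact: law_dmix.
rewrite ge0_integral_measure_sum //; last 2 first.
- by move=> x _; rewrite lee_fin.
- exact/measurable_EFinP.
apply: eq_bigr => j _; rewrite /scaled_laws valK ge0_integral_mscale //.
- exact/measurable_EFinP.
- by move=> x _; rewrite lee_fin.
Qed.

Lemma dmix_cx_fixed : (forall j, finite_mean (F j)) ->
  (cx_le (dmix L F) F <-> dmix L F = F).
Proof.
move=> F_mean; split=> [cx|->]; last by move=> i phi _.
have q_fin j t : stop_loss (q j) t \is a fin_num.
  exact/stop_loss_fin_num/finite_mean_integrable.
pose qH i := quantile (dmix L F i).
have qH_quantile i : is_quantile (dmix L F i) (qH i) by exact: quantile_is_quantile.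
have stop_loss_eq i t : stop_loss (qH i) t = stop_loss (q i) t.
  pose pi k := fine (stop_loss (q k) t).
  have piE k : stop_loss (q k) t = (pi k)%:E by rewrite fineK.
  have pi_mix k : stop_loss (qH k) t = (\sum_j L k j * pi j)%:E.
    rewrite -(stop_loss_law t (dmix_cdf k) (qH_quantile k)).
    rewrite integral_law_dmix; last 2 first.
    - exact: measurable_excess.
    - exact: excess_ge0.
    rewrite -sumEFin; apply: eq_bigr => j _.
    by rewrite (stop_loss_law t (F_cdf j) (q_quantile j)) piE EFinM.
  rewrite pi_mix piE (mix_le_eq (a := pi)) // => k.
  rewrite -lee_fin -pi_mix -piE.
  exact: cx_le_stop_loss dmix_cdf F_cdf qH_quantile q_quantile cx k t.
apply/funext => i.
apply: (cdf_eq_of_quantile_eq (F_unit i) (cdf_unit_valued (dmix_cdf i)))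
  (q_quantile i) (qH_quantile i) _.
have qH_nd := is_quantile_nondecreasing (qH_quantile i).
have qH_fin t : stop_loss (qH i) t \is a fin_num by rewrite stop_loss_eq.
apply: tail_value_inj => //.
- exact: is_quantile_left_continuous (cdf_unit_valued (dmix_cdf i)) (qH_quantile i).
- move=> a ha; have := tail_value_le (q i a) qH_nd qH_fin ha.
  have := tail_value_le (qH i a) (q_nd i) (q_fin i) ha.
  by rewrite /tail_value /tail_objective /= !stop_loss_eq; lra.
Qed.

End cdf_mixtures.

End doubly_stochastic.

Lemma cumulativeBounded_is_cdf {R : realType} (F : cumulativeBounded (0:R) 1) :
  is_cdf (F : R -> R).
Proof.
split; [exact: cumulative_is_nondecreasing | exact: cumulative_is_right_continuous |
        exact: cumulativeNy | exact: cumulativey].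
Qed.

Theorem proposition10 (R : realType) (n : nat) (L : 'M[R]_n) :
  doubly_stochastic L ->
  (* (i) *)
  (forall F : 'I_n -> cumulativeBounded (0:R) 1,
     let F' := fun i => (F i : R -> R) in
     (st_le (dmix L F') F' <-> dmix L F' = F') /\
     (st_le F' (dmix L F') <-> dmix L F' = F')) /\
  (* (ii) *)
  (forall F : 'I_n -> cumulativeBounded (0:R) 1,
     let F' := fun i => (F i : R -> R) in
     (st_le (qmix L F') F' <-> qmix L F' = F') /\
     (st_le F' (qmix L F') <-> qmix L F' = F')) /\
  (* (iii) *)
  (forall F : 'I_n -> cumulativeBounded (0:R) 1,
     let F' := fun i => (F i : R -> R) in
     (forall i, finite_mean (F' i)) ->
     (cx_le (qmix L F') F' <-> qmix L F' = F') /\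
     (cx_le F' (qmix L F') <-> qmix L F' = F')) /\
  (* (iv) *)
  (forall F : 'I_n -> cumulativeBounded (0:R) 1,
     let F' := fun i => (F i : R -> R) in
     (forall i, finite_mean (F' i)) ->
     (cx_le (dmix L F') F' <-> dmix L F' = F')).
Proof.
move=> L_ds; split; [|split; [|split]] => F F'.
- exact: dmix_st_fixed.
- exact: qmix_st_fixed (fun j => cumulativeBounded_is_cdf (F j)).
- exact: qmix_cx_fixed (fun j => cumulativeBounded_is_cdf (F j)).
- exact: dmix_cx_fixed (fun j => cumulativeBounded_is_cdf (F j)).
Qed.
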